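(* Let $I$ be a monoid with identity $1$ and let $\mathrm{Inv}=\mathrm{Map}^l_I\circ\mathrm{Map}^r_I$, restricted to the category $\mathrm{bAct}(I)$ of finite $I$-sets. For $M$ in $\mathrm{bAct}(I)$ let $\overline{\mathrm{ev}}_M:\mathrm{Inv}(M)\to M$, $f\mapsto f(1)(1)$. Then the maps $\overline{\mathrm{ev}}_{\mathrm{Inv}(M)}:\mathrm{Inv}(\mathrm{Inv}(M))\to\mathrm{Inv}(M)$ define a natural isomorphism $\mathrm{Inv}\circ\mathrm{Inv}\Rightarrow\mathrm{Inv}$.
   Context: Let $I$ be a monoid with operation $\otimes$. For a set $X$, $\mathrm{End}_l(X)$ denotes self-maps written on the left with product $f\circ g$ ($g$ first); $\mathrm{End}_r(X)$ denotes self-maps written on the right, $x\mapsto(x)f$, with $(x)(fg)=((x)f)g$. An $I$-set is a set $X$ with a pair $\xi=(\xi_l,\xi_r)$ of monoid homomorphisms $\xi_l:I\to\mathrm{End}_l(X)$, $\xi_r:I\to\mathrm{End}_r(X)$ with $(\xi_l(i)(x))\xi_r(j)=\xi_l(i)((x)\xi_r(j))$; $f:(X,\xi)\to(Y,\eta)$ is $I$-equivariant if $(f(\xi_l(i)(x)))\eta_r(i)=\eta_l(i)(f((x)\xi_r(i)))$ for all $i,x$. An $I$-set is invertible on one side if either $\xi_l(i)$ is bijective for all $i$ or $\xi_r(i)$ is bijective for all $i$; $\mathrm{bAct}(I)$ is the category of finite $I$-sets that are products (componentwise action) of $I$-sets invertible on one side, with $I$-equivariant maps. For an $I$-set $(A,\alpha)$: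 $\mathrm{Map}^l_I(A)$ is the set of $f:I\to A$ with $(f(j))\alpha_r(i)=\alpha_l(i)(f(j\otimes i))$ for all $i,j$, with action $\theta_l(k)=\mathrm{id}$, $((f)\theta_r(k))(j)=f(k\otimes j)$; $\mathrm{Map}^r_I(A)$ is the set of $f:I\to A$ with $(f(i\otimes j))\alpha_r(i)=\alpha_l(i)(f(j))$ for all $i,j$, with action $(\vartheta_l(k)(f))(i)=f(i\otimes k)$, $\vartheta_r(k)=\mathrm{id}$. Both are functors via $u\mapsto(h\mapsto u\circ h)$. *)

From mathcomp Require Import all_boot.
From mathcomp Require Import monoid.
From Stdlib Require List.

Set Implicit Arguments.
Unset Strict Implicit.
Unset Printing Implicit Defensive.

Local Open Scope group_scope.

Section ISets.
Variable I : monoidType.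

(* Raw data of an I-set: a set X with left-written endomaps [actl i]
   (xi_l(i)) and right-written endomaps [actr i], where [actr i x]
   stands for (x)xi_r(i). *)
Record iset := ISet {
  carrier :> Type;
  actl : I -> carrier -> carrier;
  actr : I -> carrier -> carrier }.

Definition is_iset (X : iset) : Prop :=
  [/\ forall x : X, actl 1 x = x,
      forall i j (x : X), actl (i * j) x = actl i (actl j x),
      forall x : X, actr 1 x = x,
      forall i j (x : X), actr (i * j) x = actr j (actr i x)
    & forall i j (x : X), actr j (actl i x) = actl i (actr j x)].

Definition equivariant (X Y : iset) (f : X -> Y) : Prop :=
  forall i (x : X), actr i (f (actl i x)) = actl i (f (actr i x)).

Definition iset_iso (X Y : iset) (f : X -> Y) : Prop :=
  equivariant f /\
  exists g : Y -> X, [/\ equivariant g, cancel f g & cancel g f].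

Definition one_side_invertible (X : iset) : Prop :=
  (forall i, bijective (@actl X i)) \/ (forall i, bijective (@actr X i)).

Definition prod_iset (K : Type) (N : K -> iset) : iset :=
  @ISet (forall k, N k)
        (fun i x k => actl i (x k))
        (fun i x k => actr i (x k)).

Definition finite_set (X : Type) : Prop :=
  exists s : list X, forall x, List.In x s.

Definition bAct (M : iset) : Prop :=
  [/\ is_iset M, finite_set M &
      exists (K : Type) (N : K -> iset),
        (forall k, is_iset (N k) /\ one_side_invertible (N k)) /\
        M = prod_iset N].

Definition mapr_cond (A : iset) (f : I -> A) : Prop :=
  forall i j, actr i (f (i * j)) = actl i (f j).

Lemma mapr_closed (A : iset) (k : I) (f : {f : I -> A | mapr_cond f}) :
  mapr_cond (fun i => proj1_sig f (i * k)).
Proof. by case: f => f Hf i j /=; rewrite -mulgA Hf. Qed.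

Definition Mapr (A : iset) : iset :=
  @ISet {f : I -> A | mapr_cond f}
        (fun k f => exist _ (fun i => proj1_sig f (i * k)) (mapr_closed k f))
        (fun _ f => f).

Definition mapl_cond (A : iset) (f : I -> A) : Prop :=
  forall i j, actr i (f j) = actl i (f (j * i)).

Lemma mapl_closed (A : iset) (k : I) (f : {f : I -> A | mapl_cond f}) :
  mapl_cond (fun j => proj1_sig f (k * j)).
Proof. by case: f => f Hf i j /=; rewrite Hf mulgA. Qed.

Definition Mapl (A : iset) : iset :=
  @ISet {f : I -> A | mapl_cond f}
        (fun _ f => f)
        (fun k f => exist _ (fun j => proj1_sig f (k * j)) (mapl_closed k f)).

Definition Inv (A : iset) : iset := Mapl (Mapr A).

Definition evbar (A : iset) (f : Inv A) : A :=
  proj1_sig (proj1_sig f 1) 1.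

End ISets.

(* An element f of Inv A is encoded by h y z := f(y)(z), a function with
   h y z = h (y i) (z i) and (h y (i z))a_r(i) = a_l(i)(h y z); an element of
   Inv (Inv A) is likewise a function G of four arguments, and evbar sends G to
   G 1 1.  These conditions split over products, so it suffices to treat a
   finite factor on which, say, every a_l(i) is invertible.  There
   s_i := a_l(i)^-1 o a_r(i) satisfies h y z = s_i (h y (i z)), hence maps the
   set of values of the h's onto itself, and by finiteness bijectively.  The
   identity s_z (G j x y z) = s_y (G 1 1 j x) then shows that G is determined
   by G 1 1, and solved for G j x y z it builds G from any h.  When the a_r(i)
   are invertible one argues alike with t_i := a_r(i)^-1 o a_l(i) and
   h y z = t_z (h y 1).  Equivariance is automatic: evbar is equivariant on
   every I-set and the inverse of an equivariant bijection between sets with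
   trivial left action is equivariant. *)

From mathcomp Require Import all_boot.
From mathcomp Require Import monoid.
From Stdlib Require List.
From Stdlib Require Import ClassicalEpsilon ProofIrrelevance FunctionalExtensionality.

Set Implicit Arguments.
Unset Strict Implicit.
Unset Printing Implicit Defensive.

Local Open Scope group_scope.

Lemma finite_onto_inj (X : Type) (E : X -> Prop) (f : X -> X) :
  finite_set X -> (forall v, E v -> exists2 u, E u & f u = v) ->
  (forall u, E u -> E (f u)) /\ (forall u v, E u -> E v -> f u = f v -> u = v).
Proof.
move=> [s s_full] f_onto.
pose g v := epsilon (inhabits v) (fun u => E u /\ f u = v).
have gP v : E v -> E (g v) /\ f (g v) = v.
  move=> /f_onto [u Eu fu].
  by apply: (epsilon_spec (inhabits v) (fun u => E u /\ f u = v)); exists u.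
pose inE x := if excluded_middle_informative (E x) then true else false.
pose l := List.nodup (fun x y : X => excluded_middle_informative (x = y))
            (List.filter inE s).
have lE x : List.In x l <-> E x.
  rewrite List.nodup_In List.filter_In /inE.
  by case: excluded_middle_informative; intuition.
have l_uniq : List.NoDup l by apply: List.NoDup_nodup.
have gl_uniq : List.NoDup (List.map g l).
  apply: List.NoDup_map_NoDup_ForallPairs => // a b /lE Ea /lE Eb gab.
  by rewrite -(proj2 (gP _ Ea)) -(proj2 (gP _ Eb)) gab.
have l_sub_gl : List.incl l (List.map g l).
  apply: List.NoDup_length_incl => //; first by rewrite List.length_map.
  by move=> _ /List.in_map_iff [x [<- /lE Ex]]; apply/lE; case: (gP _ Ex).
have Eg u : E u -> exists2 v, E v & u = g v.
  by move=> /lE /l_sub_gl /List.in_map_iff [v [<- /lE Ev]]; exists v.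
split=> [u /Eg [v Ev ->] | u u' /Eg [v Ev ->] /Eg [v' Ev' ->]].
  by rewrite (proj2 (gP _ Ev)).
by rewrite (proj2 (gP _ Ev)) (proj2 (gP _ Ev')) => ->.
Qed.

Lemma bijective_family_inverse (J T : Type) (f : J -> T -> T) :
  (forall i, bijective (f i)) ->
  exists g : J -> T -> T, forall i, cancel (f i) (g i) /\ cancel (g i) (f i).
Proof.
move=> f_bij; exists (fun i => epsilon (inhabits id)
                        (fun g => cancel (f i) g /\ cancel g (f i))) => i.
have [g fK gK] := f_bij i.
by apply: (epsilon_spec _ (fun g => cancel (f i) g /\ cancel g (f i))); exists g.
Qed.

Lemma finite_set_component (K : Type) (F : K -> Type) (k : K) :
  (forall k, F k) -> finite_set (forall k, F k) -> finite_set (F k).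
Proof.
move=> m [s s_full]; exists (List.map (fun f => f k) s) => v.
pose f k' : F k' :=
  if excluded_middle_informative (k = k') is left e then eq_rect k F v k' e
  else m k'.
have -> : v = f k.
  rewrite /f; case: excluded_middle_informative => // e.
  by rewrite (proof_irrelevance _ e erefl).
exact: List.in_map.
Qed.

Lemma sval_inj (T : Type) (P : T -> Prop) : injective (@proj1_sig T P).
Proof. exact: eq_sig_hprop (fun x => proof_irrelevance (P x)). Qed.

Section InvFunctions.
Variable I : monoidType.

Definition is_inv_fun (A : iset I) (h : I -> I -> A) : Prop :=
  (forall y z i, h y z = h (y * i) (z * i)) /\
  (forall y z i, actr i (h y (i * z)) = actl i (h y z)).

Definition is_inv2_fun (A : iset I) (G : I -> I -> I -> I -> A) : Prop :=
  [/\ forall j x y z i, G j x y z = G (j * i) (x * i) y z,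
      forall j x y z i, G j x y z = G j (i * x) (i * y) z
    & forall j x, is_inv_fun (G j x)].

Definition inv2_diag_bij (A : iset I) : Prop :=
  (forall G G' : I -> I -> I -> I -> A,
     is_inv2_fun G -> is_inv2_fun G' -> G 1 1 = G' 1 1 -> G = G') /\
  (forall h : I -> I -> A, is_inv_fun h -> exists2 G, is_inv2_fun G & G 1 1 = h).

Lemma is_inv_fun_diag (A : iset I) (h : I -> I -> A) y :
  is_inv_fun h -> h y y = h 1 1.
Proof. by case=> shift _; rewrite [RHS](shift 1 1 y) mul1g. Qed.

Lemma is_inv2_fun_diag (A : iset I) (G : I -> I -> I -> I -> A) j x :
  is_inv2_fun G -> G j x 1 1 = G 1 1 j x.
Proof.
case=> shiftr shiftl /(_ j x) Gjx.
rewrite -(is_inv_fun_diag x Gjx); transitivity (G j 1 1 x).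
  by rewrite (shiftl j 1 1 x x) !mulg1.
by rewrite (shiftl j 1 1 x j) (shiftr 1 1 j x j) !mul1g !mulg1.
Qed.

Section LeftInvertible.
Variables (A : iset I) (mu : I -> A -> A).
Hypotheses (A_fin : finite_set A) (A_iset : is_iset A).
Hypotheses (actlK : forall i, cancel (actl i) (mu i))
           (muK : forall i, cancel (mu i) (actl i)).

Let sg i a := mu i (actr i a).

Let sgM i j a : sg (i * j) a = sg j (sg i a).
Proof.
have [_ actlM _ actrM actrl] := A_iset.
apply: (can_inj (actlK (i * j))).
by rewrite /sg muK actrM actlM muK -actrl muK.
Qed.

Let sg_inv_fun h y z i : is_inv_fun h -> h y z = sg i (h y (i * z)).
Proof. by case=> _ hr; rewrite /sg hr actlK. Qed.

Let core (a : A) := exists (h : I -> I -> A) y z, is_inv_fun h /\ h y z = a.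

Let core_inv_fun h y z : is_inv_fun h -> core (h y z).
Proof. by move=> hh; exists h, y, z. Qed.

Let sg_onto i a : core a -> exists2 b, core b & sg i b = a.
Proof.
move=> [h [y [z [hh <-]]]]; exists (h y (i * z)); first exact: core_inv_fun.
by rewrite -sg_inv_fun.
Qed.

Let sg_core i a : core a -> core (sg i a).
Proof. exact: (proj1 (finite_onto_inj A_fin (sg_onto i))). Qed.

Let sg_inj i a b : core a -> core b -> sg i a = sg i b -> a = b.
Proof. exact: (proj2 (finite_onto_inj A_fin (sg_onto i))). Qed.

Let sg_diag h y z : is_inv_fun h -> sg z (h y z) = sg y (h 1 1).
Proof.
move=> hh; have := sg_inv_fun y 1 y hh; have := sg_inv_fun y 1 z hh.
by rewrite !mulg1 => <- ->; rewrite (is_inv_fun_diag y hh).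
Qed.

Lemma inv2_diag_bij_left : inv2_diag_bij A.
Proof.
split=> [G G' HG HG' G11 | h hh].
  apply: functional_extensionality => j; apply: functional_extensionality => x.
  apply: functional_extensionality => y; apply: functional_extensionality => z.
  have [_ _ /(_ j x) Gjx] := HG; have [_ _ /(_ j x) G'jx] := HG'.
  apply: (sg_inj (i := z)); rewrite ?sg_diag ?is_inv2_fun_diag ?G11 //;
    exact: core_inv_fun.
have [G GP] : exists G : I -> I -> I -> I -> A,
    forall j x y z, core (G j x y z) /\ sg z (G j x y z) = sg y (h j x).
  exists (fun j x y z => epsilon (inhabits (h j x))
                           (fun a => core a /\ sg z a = sg y (h j x))) => j x y z.
  have [b cb sgb] := sg_onto z (sg_core y (core_inv_fun j x hh)).
  by apply: (epsilon_spec _ (fun a => core a /\ sg z a = sg y (h j x))); exists b.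
have G_eq j x y z a : core a -> sg z a = sg y (h j x) -> G j x y z = a.
  move=> ca sga; have [cG sgG] := GP j x y z.
  by apply: (sg_inj (i := z) cG ca); rewrite sga.
have [h_shift _] := hh.
have G_left j x y z i : G j x y z = sg i (G j x y (i * z)).
  have [c e] := GP j x y (i * z).
  by apply: G_eq; [exact: sg_core | rewrite -sgM].
exists G; last first.
  apply: functional_extensionality => y; apply: functional_extensionality => z.
  by apply: G_eq; [exact: core_inv_fun | exact: sg_diag].
split=> [j x y z i | j x y z i | j x].
- have [c e] := GP (j * i) (x * i) y z.
  by apply: G_eq; rewrite // e -h_shift.
- have [c e] := GP j (i * x) (i * y) z.
  by apply: G_eq; rewrite // e sgM -sg_inv_fun.
split=> [y z i | y z i].
  have [c e] := GP j x y z.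
  by symmetry; apply: G_eq; rewrite // !sgM e.
by rewrite (G_left j x y z i) /sg muK.
Qed.

End LeftInvertible.

Section RightInvertible.
Variables (A : iset I) (nu : I -> A -> A).
Hypotheses (A_fin : finite_set A) (A_iset : is_iset A).
Hypotheses (actrK : forall i, cancel (actr i) (nu i))
           (nuK : forall i, cancel (nu i) (actr i)).

Let tau i a := nu i (actl i a).

Let tauM i j a : tau (i * j) a = tau i (tau j a).
Proof.
have [_ actlM _ actrM actrl] := A_iset.
apply: (can_inj (actrK (i * j))).
by rewrite /tau nuK actrM nuK actrl nuK actlM.
Qed.

Let tau_inv_fun h y z i : is_inv_fun h -> h y (i * z) = tau i (h y z).
Proof. by case=> _ hr; rewrite /tau -hr actrK. Qed.

Let tau_inv_fun1 h y z : is_inv_fun h -> h y z = tau z (h y 1).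
Proof. by move=> hh; rewrite -tau_inv_fun // mulg1. Qed.

Let tau_diag h y : is_inv_fun h -> tau y (h y 1) = h 1 1.
Proof. by move=> hh; rewrite -tau_inv_fun1 // is_inv_fun_diag. Qed.

(* Values h y z with z <> 1 need not have t_i-preimages. *)
Let core (a : A) := exists (h : I -> I -> A) y, is_inv_fun h /\ h y 1 = a.

Let tau_onto i a : core a -> exists2 b, core b & tau i b = a.
Proof.
move=> [h [y [hh <-]]]; exists (h (y * i) 1); first by exists h, (y * i).
by rewrite -tau_inv_fun // mulg1 [RHS](proj1 hh y 1 i) mul1g.
Qed.

Let tau_core i a : core a -> core (tau i a).
Proof. exact: (proj1 (finite_onto_inj A_fin (tau_onto i))). Qed.

Let tau_inj i a b : core a -> core b -> tau i a = tau i b -> a = b.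
Proof. exact: (proj2 (finite_onto_inj A_fin (tau_onto i))). Qed.

Let core_inv_fun h y z : is_inv_fun h -> core (h y z).
Proof. by move=> hh; rewrite tau_inv_fun1 //; apply: tau_core; exists h, y. Qed.

Lemma inv2_diag_bij_right : inv2_diag_bij A.
Proof.
split=> [G G' HG HG' G11 | h hh].
  apply: functional_extensionality => j; apply: functional_extensionality => x.
  apply: functional_extensionality => y; apply: functional_extensionality => z.
  have [_ _ /(_ j x) Gjx] := HG; have [_ _ /(_ j x) G'jx] := HG'.
  rewrite (tau_inv_fun1 y z Gjx) (tau_inv_fun1 y z G'jx); congr (tau z _).
  apply: (tau_inj (i := y)); rewrite ?tau_diag ?is_inv2_fun_diag ?G11 //;
    exact: core_inv_fun.
have [K KP] : exists K : I -> I -> I -> A,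
    forall j x y, core (K j x y) /\ tau y (K j x y) = h j x.
  exists (fun j x y => epsilon (inhabits (h j x))
                         (fun a => core a /\ tau y a = h j x)) => j x y.
  have [b cb taub] := tau_onto y (core_inv_fun j x hh).
  by apply: (epsilon_spec _ (fun a => core a /\ tau y a = h j x)); exists b.
have K_eq j x y a : core a -> tau y a = h j x -> K j x y = a.
  move=> ca taua; have [cK tauK] := KP j x y.
  by apply: (tau_inj (i := y) cK ca); rewrite taua.
have [h_shift _] := hh.
exists (fun j x y z => tau z (K j x y)); last first.
  apply: functional_extensionality => y; apply: functional_extensionality => z.
  rewrite (tau_inv_fun1 y z hh); congr (tau z _).
  by apply: K_eq; [exact: core_inv_fun | exact: tau_diag].
split=> [j x y z i | j x y z i | j x].
- have [c e] := KP j x y.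
  by congr (tau z _); symmetry; apply: K_eq; rewrite // e -h_shift.
- have [c e] := KP j x y.
  by congr (tau z _); symmetry; apply: K_eq; rewrite // tauM e tau_inv_fun.
split=> [y z i | y z i].
  have [c e] := KP j x (y * i).
  by rewrite tauM; congr (tau z _); apply: K_eq; [exact: tau_core | rewrite -tauM].
by rewrite tauM /tau nuK.
Qed.

End RightInvertible.

Lemma inv2_diag_bij_one_side (A : iset I) :
  finite_set A -> is_iset A -> one_side_invertible A -> inv2_diag_bij A.
Proof.
move=> A_fin A_iset.
case=> [/bijective_family_inverse [mu muP] | /bijective_family_inverse [nu nuP]].
  exact: (inv2_diag_bij_left A_fin A_iset (fun i => proj1 (muP i))
                                           (fun i => proj2 (muP i))).
exact: (inv2_diag_bij_right A_fin A_iset (fun i => proj1 (nuP i))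
                                          (fun i => proj2 (nuP i))).
Qed.

Lemma is_inv_fun_prod (K : Type) (N : K -> iset I) (h : I -> I -> prod_iset N) :
  is_inv_fun h <-> forall k, is_inv_fun (fun y z => h y z k).
Proof.
split=> [[h_shift hr] k | hk].
  by split=> y z i; [exact: (congr1 (fun a => a k) (h_shift y z i))
                    | exact: (congr1 (fun a => a k) (hr y z i))].
split=> y z i; apply: functional_extensionality_dep => k.
  exact: (proj1 (hk k) y z i).
exact: (proj2 (hk k) y z i).
Qed.

Lemma is_inv2_fun_prod (K : Type) (N : K -> iset I)
    (G : I -> I -> I -> I -> prod_iset N) :
  is_inv2_fun G <-> forall k, is_inv2_fun (fun j x y z => G j x y z k).
Proof.
split=> [[Gr Gl GG] k | Gk].
  split=> [j x y z i | j x y z i | j x].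
  - exact: (congr1 (fun a => a k) (Gr j x y z i)).
  - exact: (congr1 (fun a => a k) (Gl j x y z i)).
  - exact: (proj1 (is_inv_fun_prod (G j x)) (GG j x) k).
split=> [j x y z i | j x y z i | j x].
- by apply: functional_extensionality_dep => k; have [Gr _ _] := Gk k; exact: Gr.
- by apply: functional_extensionality_dep => k; have [_ Gl _] := Gk k; exact: Gl.
- by apply/is_inv_fun_prod => k; have [_ _] := Gk k; apply.
Qed.

Lemma inv2_diag_bij_prod (K : Type) (N : K -> iset I) :
  (forall k, inv2_diag_bij (N k)) -> inv2_diag_bij (prod_iset N).
Proof.
move=> Nbij; split=> [G G' /is_inv2_fun_prod HG /is_inv2_fun_prod HG' G11 |
                      h /is_inv_fun_prod hh].
  have Gk k : (fun j x y z => G j x y z k) = (fun j x y z => G' j x y z k).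
    by apply: (proj1 (Nbij k)) => //=; rewrite G11.
  apply: functional_extensionality => j; apply: functional_extensionality => x.
  apply: functional_extensionality => y; apply: functional_extensionality => z.
  apply: functional_extensionality_dep => k.
  exact: (congr1 (fun F => F j x y z) (Gk k)).
have [Gk GkP] : exists Gk : forall k, I -> I -> I -> I -> N k,
    forall k, is_inv2_fun (Gk k) /\ Gk k 1 1 = (fun y z => h y z k).
  exists (fun k => epsilon (inhabits (fun _ _ _ _ => h 1 1 k))
     (fun F => is_inv2_fun F /\ F 1 1 = (fun y z => h y z k))) => k.
  have [F HF F11] := proj2 (Nbij k) _ (hh k).
  by apply: (epsilon_spec _ (fun F => is_inv2_fun F /\ F 1 1 = _)); exists F.
exists (fun j x y z k => Gk k j x y z).
  by apply/is_inv2_fun_prod => k; exact: (proj1 (GkP k)).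
apply: functional_extensionality => y; apply: functional_extensionality => z.
apply: functional_extensionality_dep => k.
exact: (congr1 (fun f => f y z) (proj2 (GkP k))).
Qed.

Lemma inv2_diag_bij_inhabited (A : iset I) :
  (A -> inv2_diag_bij A) -> inv2_diag_bij A.
Proof.
move=> Abij; split=> [G G' HG | h hh].
  exact: (proj1 (Abij (G 1 1 1 1)) G G' HG).
exact: (proj2 (Abij (h 1 1)) h hh).
Qed.

Lemma inv2_diag_bij_bAct (M : iset I) : bAct M -> inv2_diag_bij M.
Proof.
case=> _ M_fin [K [N [N_inv eM]]]; subst M.
apply: inv2_diag_bij_inhabited => m; apply: inv2_diag_bij_prod => k.
have [Nk_iset Nk_inv] := N_inv k.
exact: inv2_diag_bij_one_side
  (@finite_set_component K (fun k => N k) k m M_fin) Nk_iset Nk_inv.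
Qed.

Definition inv_val (A : iset I) (h : Inv A) : I -> I -> A :=
  fun y z => sval (sval h y) z.

Definition inv2_val (A : iset I) (G : Inv (Inv A)) : I -> I -> I -> I -> A :=
  fun j x => inv_val (sval (sval G j) x).

Lemma inv_valP (A : iset I) (h : Inv A) : is_inv_fun (inv_val h).
Proof.
split=> y z i; last exact: (proj2_sig (sval h y) i z).
exact: (congr1 (fun f => sval f z) (proj2_sig h i y)).
Qed.

Lemma inv2_valP (A : iset I) (G : Inv (Inv A)) : is_inv2_fun (inv2_val G).
Proof.
split=> [j x y z i | j x y z i | j x]; last exact: inv_valP.
  exact: (congr1 (fun F => inv_val (sval F x) y z) (proj2_sig G i j)).
exact: (esym (congr1 (fun g => inv_val g y z) (proj2_sig (sval G j) i x))).
Qed.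

Lemma inv_val_inj (A : iset I) : injective (@inv_val A).
Proof.
move=> h h' e; apply: sval_inj; apply: functional_extensionality => y.
apply: sval_inj; apply: functional_extensionality => z.
exact: (congr1 (fun f => f y z) e).
Qed.

Lemma inv2_val_inj (A : iset I) : injective (@inv2_val A).
Proof.
move=> G G' e; apply: sval_inj; apply: functional_extensionality => j.
apply: sval_inj; apply: functional_extensionality => x.
exact: inv_val_inj (congr1 (fun F => F j x) e).
Qed.

Lemma inv2_val_onto (A : iset I) (G : I -> I -> I -> I -> A) :
  is_inv2_fun G -> exists GG : Inv (Inv A), inv2_val GG = G.
Proof.
move=> [Gr Gl GG].
pose G1 j x y : Mapr A := exist (@mapr_cond I A) (G j x y) (fun i z => proj2 (GG j x) y z i).
have G1_mapl j x : mapl_cond (G1 j x).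
  move=> i y; apply: sval_inj; apply: functional_extensionality => z /=.
  exact: (proj1 (GG j x) y z i).
pose G2 j x : Inv A := exist (@mapl_cond I (Mapr A)) (G1 j x) (G1_mapl j x).
have G2_mapr j : mapr_cond (G2 j).
  move=> i x; apply: sval_inj; apply: functional_extensionality => y /=.
  apply: sval_inj; apply: functional_extensionality => z /=.
  by rewrite -Gl.
pose G3 j : Mapr (Inv A) := exist (@mapr_cond I (Inv A)) (G2 j) (G2_mapr j).
have G3_mapl : mapl_cond G3.
  move=> i j; apply: sval_inj; apply: functional_extensionality => x /=.
  apply: sval_inj; apply: functional_extensionality => y /=.
  apply: sval_inj; apply: functional_extensionality => z /=.
  by rewrite -Gr.
by exists (exist _ G3 G3_mapl).
Qed.

Lemma evbar_equivariant (A : iset I) : equivariant (@evbar I A).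
Proof.
move=> i h; have hh := inv_valP h.
change (actr i (inv_val h 1 1) = actl i (inv_val h (i * 1) 1)).
by rewrite mulg1 -(is_inv_fun_diag i hh) -(proj2 hh i 1 i) mulg1.
Qed.

Lemma mapl_iso (A B : iset I) (f : Mapl A -> Mapl B) :
  equivariant f -> injective f -> (forall b, exists a, f a = b) -> iset_iso f.
Proof.
move=> f_equiv f_inj f_onto; split=> //.
have [g gK] : exists g, cancel g f.
  exists (fun b => sval (constructive_indefinite_description _ (f_onto b))) => b.
  exact: (proj2_sig (constructive_indefinite_description _ (f_onto b))).
exists g; split=> [i b | a | //]; last exact: f_inj.
apply: f_inj; rewrite gK.
by have := f_equiv i (g b); rewrite /= gK => ->.
Qed.

Lemma evbar_Inv_inj (A : iset I) :
  inv2_diag_bij A -> injective (@evbar I (Inv A)).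
Proof.
move=> [diag_inj _] G G' e; apply: inv2_val_inj.
exact: diag_inj (inv2_valP G) (inv2_valP G') (congr1 (@inv_val A) e).
Qed.

Lemma evbar_Inv_onto (A : iset I) :
  inv2_diag_bij A -> forall h : Inv A, exists G : Inv (Inv A), evbar G = h.
Proof.
move=> [_ diag_onto] h; have [G HG G11] := diag_onto _ (inv_valP h).
have [GG GGG] := inv2_val_onto HG; exists GG; apply: inv_val_inj.
by rewrite -G11 -GGG.
Qed.

End InvFunctions.

Theorem mainTheorem13 (I : monoidType) :
  (forall M : iset I, bAct M -> iset_iso (@evbar I (Inv M))) /\
  (forall (M N : iset I) (u : M -> N),
     bAct M -> bAct N -> equivariant u ->
     forall (F : Inv (Inv M)) (G : Inv (Inv N)),
       (forall a b c d,
          proj1_sig (proj1_sig (proj1_sig (proj1_sig G a) b) c) d =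
          u (proj1_sig (proj1_sig (proj1_sig (proj1_sig F a) b) c) d)) ->
       forall c d,
         proj1_sig (proj1_sig (evbar G) c) d =
         u (proj1_sig (proj1_sig (evbar F) c) d)).
Proof.
split=> [M /inv2_diag_bij_bAct M_bij | M N u _ _ _ F G FG c d]; last exact: FG.
apply: mapl_iso; first exact: evbar_equivariant.
  exact: evbar_Inv_inj.
exact: evbar_Inv_onto.
Qed.
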